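(* Let $(G,d,(D_\lambda)_{\lambda>0},\Gamma,V)$ be a dilation datum, and let $\lambda_0>1$ with $D:=D_{\lambda_0}$ satisfying $D(\Gamma)\subset\Gamma$, and suppose $0<r_-<r_+$ satisfy $B(e,r_-)\subset V\subset B(e,r_+)$ and $\lambda_0>1+r_+/r_-$. Let $M\subset\Gamma$ be a non-empty finite set. Then: (a) if $e\in M$, then for every bounded $B\subset G$ there is $n_0\in\mathbb N$ with $B\subset V(n_0,M)$; (b) for all $k\in\mathbb N$, $B(e,\lambda_0^{k+1}C_-)\subset V(k+1)\subset B(e,\lambda_0^{k+1}C_+)$, where $C_-=\big(\lambda_0-(1+\tfrac{r_+}{r_-})\big)\tfrac{r_-}{\lambda_0}$ and $C_+=\lambda_0r_-\big(1+\tfrac{\lambda_0}{\lambda_0-1}\big)$; (c) if $\mathrm{dist}(M,\{e\})\ge\frac{2\lambda_0r_+}{\lambda_0-1}$, then $\mathrm{dist}(V(n,M),\{e\})\to\infty$ as $n\to\infty$. In particular $|V(n,M)\cap\Gamma|\to\infty$ as $n\to\infty$.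
   Context: Dilation datum $(G,d,(D_\lambda),\Gamma,V)$: $G$ connected lcsc group, $d$ left-invariant metric inducing its topology, $\lambda\mapsto D_\lambda$ homomorphism $(\mathbb R_{>0},\cdot)\to\mathrm{Aut}(G)$ with $d(D_\lambda g,D_\lambda h)=\lambda d(g,h)$; $\Gamma$ a uniform lattice with $D_\lambda(\Gamma)\subset\Gamma$ for some $\lambda>1$; $V$ a bounded Borel set containing an open identity neighbourhood with $G=\bigsqcup_{\gamma\in\Gamma}\gamma V$. $B(g,r)$ is the open $d$-ball. For $M\subset\Gamma$: $V(0,M):=MV$ and $V(n,M):=D\big((V(n-1,M)\cap\Gamma)V\big)$ for $n\ge1$; $V(n):=V(n,\{e\})$. $\mathrm{dist}$ is the distance between sets with respect to $d$. *)

From Stdlib Require Import Reals List.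
Open Scope R_scope.
Set Implicit Arguments.
Unset Strict Implicit.

Record is_group (G : Type) (mul : G -> G -> G) (inv : G -> G) (e : G) : Prop := {
  grp_assoc : forall x y z, mul x (mul y z) = mul (mul x y) z;
  grp_id_l : forall x, mul e x = x;
  grp_id_r : forall x, mul x e = x;
  grp_inv_l : forall x, mul (inv x) x = e;
  grp_inv_r : forall x, mul x (inv x) = e }.

Record is_metric (G : Type) (d : G -> G -> R) : Prop := {
  met_nonneg : forall x y, 0 <= d x y;
  met_eq0 : forall x y, d x y = 0 <-> x = y;
  met_sym : forall x y, d x y = d y x;
  met_tri : forall x y z, d x z <= d x y + d y z }.

Definition ball (G : Type) (d : G -> G -> R) (g : G) (r : R) : G -> Prop :=
  fun h => d g h < r.

Definition is_open (G : Type) (d : G -> G -> R) (U : G -> Prop) : Prop :=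
  forall x, U x -> exists r, 0 < r /\ forall y, ball d x r y -> U y.

Definition is_compact (G : Type) (d : G -> G -> R) (K : G -> Prop) : Prop :=
  forall (I : Type) (U : I -> G -> Prop),
    (forall i, is_open d (U i)) ->
    (forall x, K x -> exists i, U i x) ->
    exists l : list I, forall x, K x -> exists i, In i l /\ U i x.

Definition is_connected (G : Type) (d : G -> G -> R) : Prop :=
  forall U W : G -> Prop, is_open d U -> is_open d W ->
    (forall x, U x \/ W x) -> (forall x, ~ (U x /\ W x)) ->
    (forall x, U x) \/ (forall x, W x).

Definition locally_compact (G : Type) (d : G -> G -> R) : Prop :=
  forall x, exists K, is_compact d K /\
    exists r, 0 < r /\ forall y, ball d x r y -> K y.

Definition second_countable (G : Type) (d : G -> G -> R) : Prop :=
  exists Bs : nat -> G -> Prop, (forall n, is_open d (Bs n)) /\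
    forall U x, is_open d U -> U x -> exists n, Bs n x /\ forall y, Bs n y -> U y.

Definition continuous_map (G : Type) (d : G -> G -> R) (f : G -> G) : Prop :=
  forall x eps, 0 < eps -> exists delta, 0 < delta /\
    forall y, d x y < delta -> d (f x) (f y) < eps.

Definition continuous_mul (G : Type) (d : G -> G -> R) (mul : G -> G -> G) : Prop :=
  forall x y eps, 0 < eps -> exists delta, 0 < delta /\
    forall x' y', d x x' < delta -> d y y' < delta -> d (mul x y) (mul x' y') < eps.

Inductive borel (G : Type) (d : G -> G -> R) : (G -> Prop) -> Prop :=
| borel_open U : is_open d U -> borel d U
| borel_compl A : borel d A -> borel d (fun x => ~ A x)
| borel_union (A : nat -> G -> Prop) :
    (forall n, borel d (A n)) -> borel d (fun x => exists n, A n x)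
| borel_ext A B : (forall x, A x <-> B x) -> borel d A -> borel d B.

Definition is_bounded (G : Type) (d : G -> G -> R) (B : G -> Prop) : Prop :=
  exists g r, forall x, B x -> d g x <= r.

Definition is_automorphism (G : Type) (mul : G -> G -> G) (d : G -> G -> R)
  (f : G -> G) : Prop :=
  (forall x y, f (mul x y) = mul (f x) (f y)) /\
  continuous_map d f /\
  exists g : G -> G, (forall x, f (g x) = x) /\ (forall x, g (f x) = x) /\
                     continuous_map d g.

Definition is_uniform_lattice (G : Type) (mul : G -> G -> G) (inv : G -> G) (e : G)
  (d : G -> G -> R) (Gam : G -> Prop) : Prop :=
  (Gam e /\ (forall x y, Gam x -> Gam y -> Gam (mul x y)) /\
   (forall x, Gam x -> Gam (inv x))) /\
  (exists r, 0 < r /\ forall g, Gam g -> d e g < r -> g = e) /\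
  (exists K, is_compact d K /\
     forall g, exists gam k, Gam gam /\ K k /\ g = mul gam k).

(** Dilation datum (G, d, (D_lambda), Gamma, V). D is a function of lambda,
    only its values at lambda > 0 matter. *)
Record dilation_datum (G : Type) (mul : G -> G -> G) (inv : G -> G) (e : G)
  (d : G -> G -> R) (D : R -> G -> G) (Gam V : G -> Prop) : Prop := {
  dd_group : is_group mul inv e;
  dd_metric : is_metric d;
  dd_left_inv : forall g x y, d (mul g x) (mul g y) = d x y;
  dd_mul_cont : continuous_mul d mul;
  dd_inv_cont : continuous_map d inv;
  dd_connected : is_connected d;
  dd_loc_compact : locally_compact d;
  dd_sec_countable : second_countable d;
  dd_aut : forall lam, 0 < lam -> is_automorphism mul d (D lam);
  dd_hom : forall lam mu, 0 < lam -> 0 < mu ->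
             forall g, D (lam * mu) g = D lam (D mu g);
  dd_scale : forall lam, 0 < lam -> forall g h, d (D lam g) (D lam h) = lam * d g h;
  dd_lattice : is_uniform_lattice mul inv e d Gam;
  dd_lattice_dil : exists lam, 1 < lam /\ forall gam, Gam gam -> Gam (D lam gam);
  dd_V_bounded : is_bounded d V;
  dd_V_borel : borel d V;
  dd_V_nbhd : exists U, is_open d U /\ U e /\ forall x, U x -> V x;
  dd_V_tiling : forall g, exists gam, Gam gam /\ V (mul (inv gam) g) /\
                  forall gam', Gam gam' -> V (mul (inv gam') g) -> gam' = gam }.

Fixpoint Vnm (G : Type) (mul : G -> G -> G) (Gam V : G -> Prop) (Dl : G -> G)
  (M : G -> Prop) (n : nat) : G -> Prop :=
  match n with
  | O => fun g => exists m v, M m /\ V v /\ g = mul m v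
  | S n' => fun g => exists gam v, Vnm mul Gam V Dl M n' gam /\ Gam gam /\ V v /\
                                   g = Dl (mul gam v)
  end.

(** c <= dist(A,B) (dist = inf of d(a,b), inf of empty set = +oo). *)
Definition dist_ge (G : Type) (d : G -> G -> R) (A B : G -> Prop) (c : R) : Prop :=
  forall a b, A a -> B b -> c <= d a b.

Definition dist_to_infty (G : Type) (d : G -> G -> R) (A : nat -> G -> Prop)
  (B : G -> Prop) : Prop :=
  forall c, exists N, forall n, (N <= n)%nat -> dist_ge d (A n) B c.

Definition card_ge (G : Type) (A : G -> Prop) (N : nat) : Prop :=
  exists l : list G, NoDup l /\ (N <= length l)%nat /\ forall x, In x l -> A x.

From Stdlib Require Import Reals List Lra Lia FinFun.
Open Scope R_scope.
Set Implicit Arguments.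
Unset Strict Implicit.

(* The tiles [gam V] have radius less than [rp], so the step [X |-> D ((X ∩ Gam) V)]
   turns a ball of radius [R] around [e] contained in [X] into one of radius
   [lam (R - rp)], an enclosing ball of radius [R] into one of radius [lam (R + rp)],
   and a lower bound [R] on the distance to [e] into [lam (R - rp)].  These affine
   recursions have fixed points [b = lam rp / (lam - 1)] and [-b]; the hypotheses
   [lam > 1 + rp / rm] (with [B(e, lam rm) ⊂ V(1)]) and [dist(M, e) >= 2 b] start
   them strictly above [b], so all radii grow like [lam ^ n].  For the count, a
   lattice point [g1 <> e] gives the points [D^j g1] of distinct lengths
   [lam ^ j * d e g1], whose translates all lie in [V(n, M)] once [n] is large. *)

Lemma pow_eventually_ge (l c C : R) :
  1 < l -> 0 < c -> exists N : nat, forall n, (N <= n)%nat -> C <= l ^ n * c.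
Proof.
  intros Hl Hc.
  assert (Habs : Rabs l > 1) by (rewrite Rabs_pos_eq; lra).
  destruct (Pow_x_infinity l Habs (C / c)) as [N HN].
  exists N; intros n Hn.
  specialize (HN n Hn); rewrite Rabs_pos_eq in HN by (apply pow_le; lra).
  apply Rge_le, (Rmult_le_compat_r c) in HN; [|lra].
  unfold Rdiv in HN; rewrite Rmult_assoc, Rinv_l, Rmult_1_r in HN by lra.
  exact HN.
Qed.

Lemma card_ge_injective (G : Type) (A : G -> Prop) (f : nat -> G) (N : nat) :
  Injective f -> (forall j, (j < N)%nat -> A (f j)) -> card_ge A N.
Proof.
  intros Hf HA; exists (map f (seq 0 N)); split; [|split].
  - apply Injective_map_NoDup; [exact Hf | apply seq_NoDup].
  - rewrite length_map, length_seq; lia.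
  - intros x Hx; apply in_map_iff in Hx as [j [<- Hj]].
    apply in_seq in Hj; apply HA; lia.
Qed.

Lemma Vnm_mono (G : Type) (mul : G -> G -> G) (Gam V : G -> Prop) (Dl : G -> G)
    (M M' : G -> Prop) (n : nat) (x : G) :
  (forall m, M m -> M' m) -> Vnm mul Gam V Dl M n x -> Vnm mul Gam V Dl M' n x.
Proof.
  intros HM; revert x; induction n as [|n IH]; simpl.
  - intros x [m [v [Hm Hx]]]; exists m, v; auto.
  - intros x [g [v [Hg Hx]]]; exists g, v; auto.
Qed.

Section Length.

Variables (G : Type) (mul : G -> G -> G) (inv : G -> G) (e : G) (d : G -> G -> R).
Hypothesis Hgrp : is_group mul inv e.
Hypothesis Hmet : is_metric d.
Hypothesis d_left_inv : forall g x y, d (mul g x) (mul g y) = d x y.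

Lemma mul_cancel_l g x y : mul g x = mul g y -> x = y.
Proof.
  destruct Hgrp as [assoc idl _ invl _]; intros H.
  rewrite <- (idl x), <- (idl y), <- (invl g), <- !assoc, H; reflexivity.
Qed.

Lemma mul_invK g h : mul g (mul (inv g) h) = h.
Proof.
  destruct Hgrp as [assoc idl _ _ invr].
  rewrite assoc, invr, idl; reflexivity.
Qed.

Lemma dist_refl x : d x x = 0.
Proof. apply (met_eq0 Hmet); reflexivity. Qed.

Lemma dist_mul_r g v : d g (mul g v) = d e v.
Proof.
  destruct Hgrp as [_ _ idr _ _].
  rewrite <- (d_left_inv g e v), idr; reflexivity.
Qed.

Lemma dist_e_mul_le g v : d e (mul g v) <= d e g + d e v.
Proof.
  rewrite <- (dist_mul_r g v); apply (met_tri Hmet).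
Qed.

Lemma dist_e_mul_ge g v : d e g - d e v <= d e (mul g v).
Proof.
  pose proof (met_tri Hmet e (mul g v) g) as H.
  rewrite (met_sym Hmet (mul g v) g), dist_mul_r in H; lra.
Qed.

Lemma dist_e_pos g : g <> e -> 0 < d e g.
Proof.
  destruct Hmet as [nonneg eq0 _ _]; intros Hg.
  destruct (nonneg e g) as [|H]; [assumption|].
  exfalso; apply Hg; symmetry; apply eq0; symmetry; exact H.
Qed.

Section Dilation.

Variables (Dl : G -> G) (lam : R).
Hypothesis Dl_mul : forall x y, Dl (mul x y) = mul (Dl x) (Dl y).
Hypothesis Dl_scale : forall x y, d (Dl x) (Dl y) = lam * d x y.
Hypothesis lam_gt1 : 1 < lam.

Lemma Dl_e : Dl e = e.
Proof.
  apply (mul_cancel_l (g := Dl e)); destruct Hgrp as [_ _ idr _ _].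
  rewrite <- Dl_mul, !idr; reflexivity.
Qed.

Lemma dist_e_Dl x : d e (Dl x) = lam * d e x.
Proof. rewrite <- Dl_scale, Dl_e; reflexivity. Qed.

Lemma dist_e_iter_Dl n x : d e (Nat.iter n Dl x) = lam ^ n * d e x.
Proof.
  induction n as [|n IH]; simpl; [ring|].
  rewrite dist_e_Dl, IH; ring.
Qed.

Lemma iter_Dl_inj x : x <> e -> Injective (fun n => Nat.iter n Dl x).
Proof.
  intros Hx i j Hij.
  apply (f_equal (d e)) in Hij; rewrite !dist_e_iter_Dl in Hij.
  pose proof (dist_e_pos Hx) as Hpos.
  apply Rmult_eq_reg_r in Hij; [|lra].
  destruct (Nat.lt_total i j) as [Hlt|[Heq|Hlt]]; [| exact Heq |];
    pose proof (Rlt_pow lam _ _ lam_gt1 Hlt); lra.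
Qed.

Section Tiles.

Variables (Gam V : G -> Prop) (rm rp : R).
Hypothesis Gam_e : Gam e.
Hypothesis Gam_mul : forall x y, Gam x -> Gam y -> Gam (mul x y).
Hypothesis Gam_Dl : forall x, Gam x -> Gam (Dl x).
Hypothesis tiling : forall h, exists g v, Gam g /\ V v /\ h = mul g v.
Hypothesis Dl_surj : forall x, exists y, Dl y = x.
Hypothesis V_ball : forall g, d e g < rm -> V g.
Hypothesis V_bounded : forall v, V v -> d e v < rp.

Local Notation Vn := (Vnm mul Gam V Dl).

Lemma Gam_iter_Dl n x : Gam x -> Gam (Nat.iter n Dl x).
Proof. intros Hx; induction n; simpl; auto. Qed.

Lemma Vnm_translate (M : G -> Prop) g0 n x :
  Gam g0 -> M g0 -> Vn (fun y => y = e) n x -> Vn M n (mul (Nat.iter n Dl g0) x).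
Proof.
  intros Hg0 HMg0; revert x; induction n as [|n IH]; simpl.
  - intros x [m [v [-> [Hv ->]]]].
    exists g0, v; rewrite (grp_id_l Hgrp); auto.
  - intros x [g [v [Hg [HGg [Hv ->]]]]].
    exists (mul (Nat.iter n Dl g0) g), v; repeat split; auto.
    + apply Gam_mul; [apply Gam_iter_Dl|]; assumption.
    + rewrite <- Dl_mul, (grp_assoc Hgrp); reflexivity.
Qed.

Lemma Vnm1_e_ball g : d e g < lam * rm -> Vn (fun y => y = e) 1 g.
Proof.
  intros Hg; destruct (Dl_surj g) as [y <-].
  rewrite dist_e_Dl in Hg.
  assert (Hy : d e y < rm) by nra.
  assert (He : d e e < rm) by (rewrite dist_refl; pose proof (met_nonneg Hmet e y); lra).
  exists e, y; repeat split; auto.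
  - exists e, e; repeat split; auto; rewrite (grp_id_l Hgrp); reflexivity.
  - rewrite (grp_id_l Hgrp); reflexivity.
Qed.

Lemma Vnm_S_ball (M : G -> Prop) n R0 :
  (forall g, d e g < R0 -> Vn M n g) ->
  forall g, d e g < lam * (R0 - rp) -> Vn M (S n) g.
Proof.
  intros HR g Hg; destruct (Dl_surj g) as [y <-].
  rewrite dist_e_Dl in Hg.
  destruct (tiling y) as [g1 [v [Hg1 [Hv ->]]]].
  pose proof (dist_e_mul_ge g1 v); pose proof (V_bounded Hv).
  exists g1, v; repeat split; auto.
  apply HR; nra.
Qed.

Lemma Vnm0_dist_lt (M : G -> Prop) R0 g :
  (forall m, M m -> d e m <= R0) -> Vn M 0 g -> d e g < R0 + rp.
Proof.
  intros HM [m [v [Hm [Hv ->]]]].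
  pose proof (dist_e_mul_le m v); pose proof (HM m Hm); pose proof (V_bounded Hv); lra.
Qed.

Lemma Vnm_S_dist_lt (M : G -> Prop) n R0 :
  (forall g, Vn M n g -> d e g < R0) ->
  forall g, Vn M (S n) g -> d e g < lam * (R0 + rp).
Proof.
  intros HR g [g1 [v [Hg1 [_ [Hv ->]]]]]; rewrite dist_e_Dl.
  pose proof (dist_e_mul_le g1 v); pose proof (HR g1 Hg1); pose proof (V_bounded Hv).
  nra.
Qed.

Lemma Vnm0_dist_ge (M : G -> Prop) R0 g :
  (forall m, M m -> R0 <= d e m) -> Vn M 0 g -> R0 - rp <= d e g.
Proof.
  intros HM [m [v [Hm [Hv ->]]]].
  pose proof (dist_e_mul_ge m v); pose proof (HM m Hm); pose proof (V_bounded Hv); lra.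
Qed.

Lemma Vnm_S_dist_ge (M : G -> Prop) n R0 :
  (forall g, Vn M n g -> R0 <= d e g) ->
  forall g, Vn M (S n) g -> lam * (R0 - rp) <= d e g.
Proof.
  intros HR g [g1 [v [Hg1 [_ [Hv ->]]]]]; rewrite dist_e_Dl.
  pose proof (dist_e_mul_ge g1 v); pose proof (HR g1 Hg1); pose proof (V_bounded Hv).
  nra.
Qed.

Section Radii.

Hypothesis rm_pos : 0 < rm.
Hypothesis rm_lt_rp : rm < rp.
Hypothesis lam_large : 1 + rp / rm < lam.

Let b := lam * rp / (lam - 1).
Let a := rm - rp / (lam - 1).

Let b_pos : 0 < b.
Proof. unfold b, Rdiv; apply Rmult_lt_0_compat; [nra | apply Rinv_0_lt_compat; lra]. Qed.

Let rp_lt : rp < (lam - 1) * rm.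
Proof.
  pose proof (Rmult_lt_compat_r rm _ _ rm_pos lam_large) as H.
  unfold Rdiv in H; rewrite Rmult_plus_distr_r, Rmult_assoc, Rinv_l in H by lra.
  lra.
Qed.

Let a_pos : 0 < a.
Proof.
  assert (rp / (lam - 1) < rm); [|unfold a; lra].
  apply (Rmult_lt_reg_r (lam - 1)); [lra|].
  unfold Rdiv; rewrite Rmult_assoc, Rinv_l by lra; lra.
Qed.

Lemma ball_sub_Vnm_e n g : d e g < lam ^ S n * a + b -> Vn (fun y => y = e) (S n) g.
Proof.
  revert g; induction n as [|n IH]; intros g Hg.
  - apply Vnm1_e_ball.
    replace (lam * rm) with (lam ^ 1 * a + b) by (unfold a, b; simpl; field; lra).
    exact Hg.
  - apply (Vnm_S_ball IH).
    replace (lam * (lam ^ S n * a + b - rp)) with (lam ^ S (S n) * a + b)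
      by (unfold b; simpl; field; lra).
    exact Hg.
Qed.

Lemma Vnm_e_dist_lt n g : Vn (fun y => y = e) n g -> d e g < lam ^ n * (rp + b) - b.
Proof.
  revert g; induction n as [|n IH]; intros g Hg.
  - replace (lam ^ 0 * (rp + b) - b) with (0 + rp) by (simpl; ring).
    apply (Vnm0_dist_lt (M := fun y => y = e)); [|exact Hg].
    intros m ->; rewrite dist_refl; lra.
  - replace (lam ^ S n * (rp + b) - b) with (lam * (lam ^ n * (rp + b) - b + rp))
      by (unfold b; simpl; field; lra).
    exact (Vnm_S_dist_lt IH Hg).
Qed.

Lemma Vnm_far_dist_ge (M : G -> Prop) n g :
  (forall m, M m -> 2 * b <= d e m) -> Vn M n g -> lam ^ n * (rp / (lam - 1)) + b <= d e g.
Proof.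
  intros HM; revert g; induction n as [|n IH]; intros g Hg.
  - replace (lam ^ 0 * (rp / (lam - 1)) + b) with (2 * b - rp)
      by (unfold b; simpl; field; lra).
    exact (Vnm0_dist_ge HM Hg).
  - replace (lam ^ S n * (rp / (lam - 1)) + b)
      with (lam * (lam ^ n * (rp / (lam - 1)) + b - rp)) by (unfold b; simpl; field; lra).
    exact (Vnm_S_dist_ge IH Hg).
Qed.

Lemma ball_sub_Vnm_e_scaled k g :
  d e g < lam ^ S k * ((lam - (1 + rp / rm)) * (rm / lam)) -> Vn (fun y => y = e) (S k) g.
Proof.
  intros Hg; apply ball_sub_Vnm_e.
  replace (lam ^ S k * ((lam - (1 + rp / rm)) * (rm / lam)))
    with (lam ^ k * ((lam - 1) * a)) in Hg by (unfold a; simpl; field; lra).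
  assert (0 < lam ^ k * a) by (apply Rmult_lt_0_compat; [apply pow_lt; lra | exact a_pos]).
  simpl; lra.
Qed.

Lemma Vnm_e_sub_ball_scaled k g :
  Vn (fun y => y = e) (S k) g -> d e g < lam ^ S k * (lam * rm * (1 + lam / (lam - 1))).
Proof.
  intros Hg; pose proof (Vnm_e_dist_lt Hg) as H.
  assert (Hb : rp + b <= lam * rm * (1 + lam / (lam - 1))).
  { replace (rp + b) with (rp * (1 + lam / (lam - 1))) by (unfold b; field; lra).
    apply Rmult_le_compat_r; [|nra].
    unfold Rdiv; pose proof (Rinv_0_lt_compat (lam - 1) ltac:(lra)); nra. }
  pose proof (Rmult_le_compat_l (lam ^ S k) _ _ ltac:(apply pow_le; lra) Hb); lra.
Qed.

Lemma bounded_sub_Vnm (M : G -> Prop) (B : G -> Prop) :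
  M e -> is_bounded d B -> exists n0, forall x, B x -> Vn M n0 x.
Proof.
  intros HMe [g0 [r HB]].
  destruct (pow_eventually_ge (d e g0 + r) lam_gt1 a_pos) as [N HN].
  exists (S N); intros x Hx.
  apply (Vnm_mono (M := fun y => y = e)); [intros m ->; exact HMe|].
  apply ball_sub_Vnm_e.
  pose proof (HB x Hx); pose proof (met_tri Hmet e g0 x); pose proof (HN (S N) (le_S _ _ (le_n N))).
  lra.
Qed.

Lemma Vnm_dist_to_infty (M : G -> Prop) :
  dist_ge d M (fun y => y = e) (2 * lam * rp / (lam - 1)) ->
  dist_to_infty d (fun n => Vn M n) (fun y => y = e).
Proof.
  intros HM C.
  assert (Ht : 0 < rp / (lam - 1)) by (apply Rdiv_lt_0_compat; lra).
  destruct (pow_eventually_ge C lam_gt1 Ht) as [N HN].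
  exists N; intros n Hn x y Hx ->.
  assert (HMb : forall m, M m -> 2 * b <= d e m).
  { intros m Hm; rewrite (met_sym Hmet).
    replace (2 * b) with (2 * lam * rp / (lam - 1)) by (unfold b; field; lra).
    exact (HM m e Hm eq_refl). }
  rewrite (met_sym Hmet); pose proof (Vnm_far_dist_ge HMb Hx); pose proof (HN n Hn).
  pose proof b_pos; lra.
Qed.

Lemma Gam_nontrivial : (exists g, g <> e) -> exists g1, Gam g1 /\ g1 <> e.
Proof.
  intros [g Hg].
  destruct (pow_eventually_ge rp lam_gt1 (dist_e_pos Hg)) as [K HK].
  destruct (tiling (Nat.iter K Dl g)) as [g1 [v [Hg1 [Hv Hgv]]]].
  exists g1; split; [exact Hg1|]; intros ->.
  rewrite (grp_id_l Hgrp) in Hgv.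
  pose proof (dist_e_iter_Dl K g) as H; rewrite Hgv in H.
  pose proof (V_bounded Hv); pose proof (HK K (le_n K)); lra.
Qed.

Lemma card_Vnm_Gam_unbounded (M : G -> Prop) :
  (exists g, g <> e) -> (exists m, M m) -> (forall m, M m -> Gam m) ->
  forall N : nat, exists n0 : nat, forall n, (n0 <= n)%nat ->
    card_ge (fun x => Vn M n x /\ Gam x) N.
Proof.
  intros Hnontriv [m Hm] HMGam N.
  destruct (Gam_nontrivial Hnontriv) as [g1 [Hg1 Hg1e]].
  destruct (pow_eventually_ge (lam ^ N * d e g1) lam_gt1 a_pos) as [K HK].
  exists (S K); intros [|n] Hn; [lia|].
  apply (card_ge_injective (f := fun j => mul (Nat.iter (S n) Dl m) (Nat.iter j Dl g1))).
  - intros i j Hij; apply mul_cancel_l in Hij; exact (iter_Dl_inj Hg1e Hij).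
  - intros j Hj; split.
    + apply Vnm_translate; auto.
      apply ball_sub_Vnm_e; rewrite dist_e_iter_Dl.
      assert (lam ^ j <= lam ^ N) by (apply Rle_pow; lia || lra).
      pose proof (dist_e_pos Hg1e); pose proof (HK (S n) ltac:(lia)).
      assert (lam ^ j * d e g1 <= lam ^ N * d e g1) by (apply Rmult_le_compat_r; lra).
      lra.
    + apply Gam_mul; apply Gam_iter_Dl; auto.
Qed.

End Radii.

End Tiles.

End Dilation.

End Length.

Theorem theorem5 (G : Type) (mul : G -> G -> G) (inv : G -> G) (e : G)
  (d : G -> G -> R) (D : R -> G -> G) (Gam V : G -> Prop)
  (HD : dilation_datum mul inv e d D Gam V)
  (lam0 rm rp : R) (Hlam0 : 1 < lam0)
  (HDGam : forall gam, Gam gam -> Gam (D lam0 gam))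
  (Hrm : 0 < rm) (Hrmp : rm < rp)
  (HVin : forall g, ball d e rm g -> V g)
  (HVout : forall g, V g -> ball d e rp g)
  (Hlam : 1 + rp / rm < lam0)
  (M : G -> Prop) (HMfin : exists l : list G, forall x, M x <-> In x l)
  (HMne : exists m, M m) (HMGam : forall m, M m -> Gam m) :
  (* (a) *)
  (M e -> forall B : G -> Prop, is_bounded d B ->
     exists n0 : nat, forall x, B x -> Vnm mul Gam V (D lam0) M n0 x) /\
  (* (b) *)
  (forall k : nat,
     let Cm := (lam0 - (1 + rp / rm)) * (rm / lam0) in
     let Cp := lam0 * rm * (1 + lam0 / (lam0 - 1)) in
     (forall g, ball d e (lam0 ^ (k + 1) * Cm) g ->
                Vnm mul Gam V (D lam0) (fun x => x = e) (k + 1) g) /\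
     (forall g, Vnm mul Gam V (D lam0) (fun x => x = e) (k + 1) g ->
                ball d e (lam0 ^ (k + 1) * Cp) g)) /\
  (* (c) *)
  (dist_ge d M (fun x => x = e) (2 * lam0 * rp / (lam0 - 1)) ->
     dist_to_infty d (fun n => Vnm mul Gam V (D lam0) M n) (fun x => x = e)) /\
  (* "in particular": #|V(n,M) ∩ Gamma| -> oo (for nontrivial G) *)
  ((exists g, g <> e) ->
     forall N : nat, exists n0 : nat, forall n, (n0 <= n)%nat ->
       card_ge (fun x => Vnm mul Gam V (D lam0) M n x /\ Gam x) N).
Proof.
  pose proof (dd_group HD) as Hgrp.
  assert (Hpos : 0 < lam0) by lra.
  destruct (dd_aut HD Hpos) as [Dl_mul [_ [Dinv [DlK _]]]].
  pose proof (dd_scale HD Hpos) as Dl_scale.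
  destruct (dd_lattice HD) as [[Gam_e [Gam_mul _]] _].
  assert (Dl_surj : forall x, exists y, D lam0 y = x) by (intro x; exists (Dinv x); apply DlK).
  assert (tiling : forall h, exists g v, Gam g /\ V v /\ h = mul g v).
  { intro h; destruct (dd_V_tiling HD h) as [g [Hg [Hv _]]].
    exists g, (mul (inv g) h); rewrite (mul_invK Hgrp); auto. }
  pose proof (dd_metric HD) as Hmet; pose proof (dd_left_inv HD) as Hli.
  split; [|split; [|split]].
  - intros HMe B HB; eapply bounded_sub_Vnm with (rm := rm); eauto.
  - intros k Cm Cp; rewrite Nat.add_1_r; split; intros g Hg.
    + eapply ball_sub_Vnm_e_scaled; eauto.
    + eapply Vnm_e_sub_ball_scaled; eauto.
  - intros Hdist; eapply Vnm_dist_to_infty with (rm := rm); eauto.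
  - intros Hnontriv; eapply card_Vnm_Gam_unbounded with (rm := rm); eauto.
Qed.
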